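(* Let $M$ be a timelike surface in $\mathbb{R}^{3,1}$ with a canonical null direction with respect to a constant unit spacelike vector $Z$, such that $II(Z^\top,Z^\top)\neq0$ everywhere. Then, in the orthonormal normal frame $(Z^\perp,\nu)$, $$II(W,W)=\frac{K_N}{|II(Z^\top,Z^\top)|}\,Z^\perp+\frac{|\vec H|^2-K}{|II(Z^\top,Z^\top)|}\,\nu .$$ In particular $|II(W,W)|^2\,|II(Z^\top,Z^\top)|^2=(|\vec H|^2-K)^2+K_N^2$.
   Context: $\mathbb{R}^{3,1}$ is $\mathbb{R}^{4}$ with the metric $-dx_1^2+dx_2^2+dx_3^2+dx_4^2$. A surface is timelike if the induced metric has signature $(1,1)$ (its normal bundle is then spacelike); a vector $v$ is lightlike if $v\ne0$ and $\langle v,v\rangle=0$. For a constant vector $Z$, $Z=Z^\top+Z^\perp$ along $M$; $M$ has a canonical null direction with respect to $Z$ if $Z^\top$ is lightlike everywhere on $M$. $W$ is the unique lightlike tangent field with $\langle Z^\top,W\rangle=-1$; $II$ is the second fundamental form, $A_\xi$ the shape operator ($\langle A_\xi X,Y\rangle=\langle II(X,Y),\xi\rangle$), $\vec H=\frac12\operatorname{tr}II$ the mean curvature vector, $|\vec H|^2=\langle\vec H,\vec H\rangle$, $K$ the Gaussian curvature. $\nu:=II(Z^\top,Z^\top)/|II(Z^\top,Z^\top)|$, $e_1=(Z^\top+W)/\sqrt2$, $e_2=(Z^\top-W)/\sqrt2$, and the normal curvature is $K_N:=\langle (A_{Z^\perp}\circ A_\nu-A_\nu\circ A_{Z^\perp})(e_1),e_2\rangle$.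 *)

From Stdlib Require Import Reals Lra ClassicalEpsilon.
Open Scope R_scope.

Record V4 := mkV4 { c0 : R; c1 : R; c2 : R; c3 : R }.

Definition vzero : V4 := mkV4 0 0 0 0.
Definition vadd (x y : V4) : V4 :=
  mkV4 (c0 x + c0 y) (c1 x + c1 y) (c2 x + c2 y) (c3 x + c3 y).
Definition vscal (a : R) (x : V4) : V4 :=
  mkV4 (a * c0 x) (a * c1 x) (a * c2 x) (a * c3 x).
Definition vsub (x y : V4) : V4 := vadd x (vscal (-1) y).
Definition ip (x y : V4) : R :=
  - (c0 x * c0 y) + c1 x * c1 y + c2 x * c2 y + c3 x * c3 y.
(** length of a spacelike vector *)
Definition vnorm (x : V4) : R := sqrt (ip x x).

Definition open2 (U : R -> R -> Prop) : Prop :=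
  forall u v, U u v -> exists r, 0 < r /\
    forall u' v', Rabs (u' - u) < r -> Rabs (v' - v) < r -> U u' v'.

Definition cont2 (U : R -> R -> Prop) (g : R -> R -> R) : Prop :=
  forall u v, U u v -> forall eps, 0 < eps -> exists d, 0 < d /\
    forall u' v', Rabs (u' - u) < d -> Rabs (v' - v) < d ->
      Rabs (g u' v' - g u v) < eps.

(** partial derivatives (value 0 chosen arbitrarily where they do not exist) *)
Definition D1 (g : R -> R -> R) (u v : R) : R :=
  epsilon (inhabits 0) (fun l => derivable_pt_lim (fun x => g x v) u l).
Definition D2 (g : R -> R -> R) (u v : R) : R :=
  epsilon (inhabits 0) (fun l => derivable_pt_lim (fun y => g u y) v l).

Definition ex_D1 (g : R -> R -> R) (u v : R) : Prop :=
  exists l, derivable_pt_lim (fun x => g x v) u l.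
Definition ex_D2 (g : R -> R -> R) (u v : R) : Prop :=
  exists l, derivable_pt_lim (fun y => g u y) v l.

Fixpoint Ck (k : nat) (U : R -> R -> Prop) (g : R -> R -> R) : Prop :=
  match k with
  | O => cont2 U g
  | S k' => cont2 U g /\ (forall u v, U u v -> ex_D1 g u v /\ ex_D2 g u v)
            /\ Ck k' U (D1 g) /\ Ck k' U (D2 g)
  end.

Definition smooth_on (U : R -> R -> Prop) (g : R -> R -> R) : Prop :=
  forall k, Ck k U g.

Definition smooth_map_on (U : R -> R -> Prop) (f : R -> R -> V4) : Prop :=
  smooth_on U (fun a b => c0 (f a b)) /\ smooth_on U (fun a b => c1 (f a b)) /\
  smooth_on U (fun a b => c2 (f a b)) /\ smooth_on U (fun a b => c3 (f a b)).

Definition VD1 (f : R -> R -> V4) (u v : R) : V4 :=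
  mkV4 (D1 (fun a b => c0 (f a b)) u v) (D1 (fun a b => c1 (f a b)) u v)
       (D1 (fun a b => c2 (f a b)) u v) (D1 (fun a b => c3 (f a b)) u v).
Definition VD2 (f : R -> R -> V4) (u v : R) : V4 :=
  mkV4 (D2 (fun a b => c0 (f a b)) u v) (D2 (fun a b => c1 (f a b)) u v)
       (D2 (fun a b => c2 (f a b)) u v) (D2 (fun a b => c3 (f a b)) u v).

(** index 0 = first coordinate u, index 1 (or any other) = second coordinate v *)
Definition Dpart (i : nat) (g : R -> R -> R) : R -> R -> R :=
  match i with O => D1 g | _ => D2 g end.
Definition dpart (f : R -> R -> V4) (i : nat) : R -> R -> V4 :=
  match i with O => VD1 f | _ => VD2 f end.

Definition sum2 (h : nat -> R) : R := h 0%nat + h 1%nat.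
Definition vsum2 (h : nat -> V4) : V4 := vadd (h 0%nat) (h 1%nat).

Definition gm (f : R -> R -> V4) (i j : nat) (u v : R) : R :=
  ip (dpart f i u v) (dpart f j u v).
Definition detg (f : R -> R -> V4) (u v : R) : R :=
  gm f 0 0 u v * gm f 1 1 u v - gm f 0 1 u v * gm f 0 1 u v.
Definition ginv (f : R -> R -> V4) (i j : nat) (u v : R) : R :=
  match i, j with
  | O, O => gm f 1 1 u v / detg f u v
  | S _, S _ => gm f 0 0 u v / detg f u v
  | _, _ => - gm f 0 1 u v / detg f u v
  end.

(** tangent vector with coordinates a = (a^1,a^2) in the basis (f_u, f_v) *)
Definition cd (a : R * R) (i : nat) : R := match i with O => fst a | _ => snd a end.
Definition tv (f : R -> R -> V4) (a : R * R) (u v : R) : V4 :=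
  vadd (vscal (fst a) (VD1 f u v)) (vscal (snd a) (VD2 f u v)).
Definition basis (i : nat) : R * R := match i with O => (1, 0) | _ => (0, 1) end.

(** coordinates of the tangential part X^T of a vector X *)
Definition tcoord (f : R -> R -> V4) (X : V4) (u v : R) : R * R :=
  (sum2 (fun l => ginv f 0 l u v * ip X (dpart f l u v)),
   sum2 (fun l => ginv f 1 l u v * ip X (dpart f l u v))).
Definition tproj (f : R -> R -> V4) (X : V4) (u v : R) : V4 :=
  tv f (tcoord f X u v) u v.
Definition nproj (f : R -> R -> V4) (X : V4) (u v : R) : V4 :=
  vsub X (tproj f X u v).

Definition IIb (f : R -> R -> V4) (i j : nat) (u v : R) : V4 :=
  nproj f (dpart (dpart f i) j u v) u v.
Definition II (f : R -> R -> V4) (a b : R * R) (u v : R) : V4 :=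
  vsum2 (fun i => vsum2 (fun j => vscal (cd a i * cd b j) (IIb f i j u v))).

Definition Hvec (f : R -> R -> V4) (u v : R) : V4 :=
  vscal (/2) (vsum2 (fun i => vsum2 (fun j => vscal (ginv f i j u v) (IIb f i j u v)))).

(** shape operator A_xi in coordinates: <A_xi X, Y> = <II(X,Y), xi> *)
Definition Ash (f : R -> R -> V4) (xi : V4) (a : R * R) (u v : R) : R * R :=
  (sum2 (fun i => ginv f 0 i u v * ip (II f a (basis i) u v) xi),
   sum2 (fun i => ginv f 1 i u v * ip (II f a (basis i) u v) xi)).

Definition Gam (f : R -> R -> V4) (k i j : nat) (u v : R) : R :=
  / 2 * sum2 (fun l => ginv f k l u v *
     (Dpart i (gm f j l) u v + Dpart j (gm f i l) u v - Dpart l (gm f i j) u v)).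

(** R_1212 = < R(d1,d2)d2, d1 >, R(X,Y) = [nabla_X,nabla_Y] - nabla_[X,Y] *)
Definition Riem1212 (f : R -> R -> V4) (u v : R) : R :=
  sum2 (fun m => gm f 0 m u v *
    (D1 (Gam f m 1 1) u v - D2 (Gam f m 0 1) u v
     + sum2 (fun l => Gam f l 1 1 u v * Gam f m 0 l u v
                      - Gam f l 0 1 u v * Gam f m 1 l u v))).

Definition Kgauss (f : R -> R -> V4) (u v : R) : R :=
  Riem1212 f u v / detg f u v.

Definition ZT (f : R -> R -> V4) (Z : V4) (u v : R) : R * R := tcoord f Z u v.

Definition nuv (f : R -> R -> V4) (Z : V4) (u v : R) : V4 :=
  let N := II f (ZT f Z u v) (ZT f Z u v) u v in vscal (/ vnorm N) N.

Definition e1c (f : R -> R -> V4) (Z : V4) (w : R * R) (u v : R) : R * R :=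
  let T := ZT f Z u v in ((fst T + fst w) / sqrt 2, (snd T + snd w) / sqrt 2).
Definition e2c (f : R -> R -> V4) (Z : V4) (w : R * R) (u v : R) : R * R :=
  let T := ZT f Z u v in ((fst T - fst w) / sqrt 2, (snd T - snd w) / sqrt 2).

Definition psub (a b : R * R) : R * R := (fst a - fst b, snd a - snd b).

Definition KN (f : R -> R -> V4) (Z : V4) (w : R * R) (u v : R) : R :=
  let Zp := nproj f Z u v in
  let nu := nuv f Z u v in
  let e1 := e1c f Z w u v in
  ip (tv f (psub (Ash f Zp (Ash f nu e1 u v) u v) (Ash f nu (Ash f Zp e1 u v) u v)) u v)
     (tv f (e2c f Z w u v) u v).

(* Differentiating <Z^T, Z^T> = 0 along M, and using that Z is constant, gives
   <II(Z^T, X), Z^perp> = 0 for every tangent X, i.e. A_{Z^perp} Z^T = 0.  In the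
   null frame (Z^T, W) the inverse metric is -(Z^T (x) W + W (x) Z^T), so
   H = -II(Z^T, W), and the Gauss equation gives
   K = |II(Z^T,W)|^2 - <II(Z^T,Z^T), II(W,W)>; hence |H|^2 - K = <II(W,W), N>
   with N = II(Z^T,Z^T).  Likewise A_{Z^perp} W = -<II(W,W), Z^perp> Z^T turns
   K_N into |N| <II(W,W), Z^perp>.  Since Z^T, W, Z^perp, N span R^{3,1}, the
   normal vector II(W,W) is determined by these two inner products. *)

From Stdlib Require Import Reals Lra Psatz ClassicalEpsilon.
From Coquelicot Require Import Coquelicot.
Open Scope R_scope.

Lemma ip_sym a b : ip a b = ip b a.
Proof. unfold ip; ring. Qed.
Lemma ip_add_l a b c : ip (vadd a b) c = ip a c + ip b c.
Proof. unfold ip, vadd; simpl; ring. Qed.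
Lemma ip_add_r a b c : ip c (vadd a b) = ip c a + ip c b.
Proof. unfold ip, vadd; simpl; ring. Qed.
Lemma ip_scal_l r a c : ip (vscal r a) c = r * ip a c.
Proof. unfold ip, vscal; simpl; ring. Qed.
Lemma ip_scal_r r a c : ip c (vscal r a) = r * ip c a.
Proof. unfold ip, vscal; simpl; ring. Qed.
Lemma ip_sub_l a b c : ip (vsub a b) c = ip a c - ip b c.
Proof. unfold ip, vsub, vadd, vscal; simpl; ring. Qed.
Lemma ip_sub_r a b c : ip c (vsub a b) = ip c a - ip c b.
Proof. unfold ip, vsub, vadd, vscal; simpl; ring. Qed.
Lemma ip_zero_l a : ip vzero a = 0.
Proof. unfold ip, vzero; simpl; ring. Qed.

Ltac ip_expand :=
  repeat progress rewrite ?ip_sub_l, ?ip_sub_r, ?ip_add_l, ?ip_add_r, ?ip_scal_l, ?ip_scal_r.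

(* Rewrites every [ip Y X] with [Y] after [X] in the list into [ip X Y], so that
   [ring]/[field] see each inner product under a single name. *)
Ltac ip_normalize L :=
  match L with
  | nil => idtac
  | cons ?X ?rest =>
      let rec go R := match R with nil => idtac | cons ?Y ?r => rewrite ?(ip_sym Y X); go r end in
      go rest; ip_normalize rest
  end.

Lemma vsub_eq0 A B : vsub A B = vzero -> A = B.
Proof.
  destruct A, B; unfold vsub, vadd, vscal, vzero; simpl; intro H; injection H; intros.
  f_equal; lra.
Qed.

Lemma vscal_vscal r s x : vscal r (vscal s x) = vscal (r * s) x.
Proof. destruct x; unfold vscal; simpl; f_equal; ring. Qed.

Lemma ip_orth_timelike_pos t N : ip t t < 0 -> ip N t = 0 -> N <> vzero -> 0 < ip N N.
Proof.
  destruct t as [t0 t1 t2 t3], N as [n0 n1 n2 n3]; unfold ip; simpl; intros Ht HN Hz.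
  assert (Hcs : (n0*t0)^2 <= (n1^2+n2^2+n3^2)*(t1^2+t2^2+t3^2)).
  { replace (n0*t0) with (n1*t1+n2*t2+n3*t3) by lra.
    assert (0 <= (n1*t2-n2*t1)^2 + (n1*t3-n3*t1)^2 + (n2*t3-n3*t2)^2).
    { repeat apply Rplus_le_le_0_compat; apply pow2_ge_0. }
    nra. }
  destruct (Req_dec (n1^2+n2^2+n3^2) 0) as [E|E].
  - exfalso. apply Hz. assert (n1 = 0) by nra. assert (n2 = 0) by nra. assert (n3 = 0) by nra.
    subst. assert (t0 <> 0) by nra.
    assert (n0 = 0) by (apply (Rmult_eq_reg_r t0); lra). subst; reflexivity.
  - assert (0 < n1^2+n2^2+n3^2) by nra.
    assert (n0^2*t0^2 < (n1^2+n2^2+n3^2)*t0^2) by nra.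
    assert (n0^2 < n1^2+n2^2+n3^2) by nra. nra.
Qed.

Definition det4 (a b c d : V4) : R :=
  let '(mkV4 a0 a1 a2 a3) := a in let '(mkV4 b0 b1 b2 b3) := b in
  let '(mkV4 c0 c1 c2 c3) := c in let '(mkV4 d0 d1 d2 d3) := d in
  a0*(b1*(c2*d3-c3*d2)-b2*(c1*d3-c3*d1)+b3*(c1*d2-c2*d1))
 -a1*(b0*(c2*d3-c3*d2)-b2*(c0*d3-c3*d0)+b3*(c0*d2-c2*d0))
 +a2*(b0*(c1*d3-c3*d1)-b1*(c0*d3-c3*d0)+b3*(c0*d1-c1*d0))
 -a3*(b0*(c1*d2-c2*d1)-b1*(c0*d2-c2*d0)+b2*(c0*d1-c1*d0)).

Definition sym_det4 (aa ab ac ad bb bc bd cc cd dd : R) : R :=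
  aa*(bb*(cc*dd-cd*cd)-bc*(bc*dd-cd*bd)+bd*(bc*cd-cc*bd))
 -ab*(ab*(cc*dd-cd*cd)-bc*(ac*dd-cd*ad)+bd*(ac*cd-cc*ad))
 +ac*(ab*(bc*dd-cd*bd)-bb*(ac*dd-cd*ad)+bd*(ac*bd-bc*ad))
 -ad*(ab*(bc*cd-cc*bd)-bb*(ac*cd-cc*ad)+bc*(ac*bd-bc*ad)).

(* [det (M eta M^T) = det M ^ 2 * det eta] with [det eta = -1]. *)
Lemma det4_sqr_gram a b c d :
  det4 a b c d * det4 a b c d =
  - sym_det4 (ip a a) (ip a b) (ip a c) (ip a d) (ip b b) (ip b c) (ip b d)
             (ip c c) (ip c d) (ip d d).
Proof. destruct a, b, c, d; unfold sym_det4, det4, ip; simpl. ring. Qed.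

(* Cramer's rule for the system [ip a R = ip b R = ip c R = ip d R = 0]. *)
Lemma orth_basis_eq0 a b c d R :
  det4 a b c d <> 0 ->
  ip a R = 0 -> ip b R = 0 -> ip c R = 0 -> ip d R = 0 -> R = vzero.
Proof.
  intros Hd ha hb hc hd.
  destruct a as [a0 a1 a2 a3], b as [b0 b1 b2 b3], c as [e0 e1 e2 e3],
    d as [d0 d1 d2 d3], R as [r0 r1 r2 r3].
  unfold ip in *; simpl in *.
  set (D := det4 (mkV4 a0 a1 a2 a3) (mkV4 b0 b1 b2 b3) (mkV4 e0 e1 e2 e3) (mkV4 d0 d1 d2 d3)) in *.
  set (pa := - (a0*r0)+a1*r1+a2*r2+a3*r3) in *. set (pb := - (b0*r0)+b1*r1+b2*r2+b3*r3) in *.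
  set (pc := - (e0*r0)+e1*r1+e2*r2+e3*r3) in *. set (pd := - (d0*r0)+d1*r1+d2*r2+d3*r3) in *.
  assert (E0 : D * - r0 = det4 (mkV4 pa a1 a2 a3) (mkV4 pb b1 b2 b3) (mkV4 pc e1 e2 e3) (mkV4 pd d1 d2 d3))
    by (unfold D, det4, pa, pb, pc, pd; ring).
  assert (E1 : D * r1 = det4 (mkV4 a0 pa a2 a3) (mkV4 b0 pb b2 b3) (mkV4 e0 pc e2 e3) (mkV4 d0 pd d2 d3))
    by (unfold D, det4, pa, pb, pc, pd; ring).
  assert (E2 : D * r2 = det4 (mkV4 a0 a1 pa a3) (mkV4 b0 b1 pb b3) (mkV4 e0 e1 pc e3) (mkV4 d0 d1 pd d3))
    by (unfold D, det4, pa, pb, pc, pd; ring).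
  assert (E3 : D * r3 = det4 (mkV4 a0 a1 a2 pa) (mkV4 b0 b1 b2 pb) (mkV4 e0 e1 e2 pc) (mkV4 d0 d1 d2 pd))
    by (unfold D, det4, pa, pb, pc, pd; ring).
  rewrite ha, hb, hc, hd in E0, E1, E2, E3. unfold det4 in E0, E1, E2, E3.
  unfold vzero; f_equal; (apply (Rmult_eq_reg_l D); [lra | exact Hd]).
Qed.

Lemma normal_frame_decomp X Y E N V :
  ip X X = 0 -> ip Y Y = 0 -> ip X Y = -1 ->
  ip X E = 0 -> ip Y E = 0 -> ip E E = 1 ->
  ip X N = 0 -> ip Y N = 0 -> ip E N = 0 -> 0 < ip N N ->
  ip X V = 0 -> ip Y V = 0 ->
  V = vadd (vscal (ip V E) E) (vscal (ip V N / ip N N) N).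
Proof.
  intros XX YY XY XE YE EE XN YN EN NN XV YV.
  assert (Hdet : det4 X Y E N <> 0).
  { intro e. pose proof (det4_sqr_gram X Y E N) as G. rewrite e in G.
    rewrite XX, XY, XE, XN, YY, YE, YN, EE, EN in G. unfold sym_det4 in G. nra. }
  apply vsub_eq0, (orth_basis_eq0 X Y E N); trivial; ip_expand;
    rewrite ?(ip_sym E V), ?(ip_sym N V), ?(ip_sym N E), ?XV, ?YV, ?XE, ?YE, ?XN, ?YN, ?EE, ?EN;
    field; lra.
Qed.

(** * Partial derivatives *)

Definition line_restr {A : Type} (j : nat) (h : R -> R -> A) (u v : R) : R -> A :=
  match j with O => fun t => h t v | S _ => fun t => h u t end.
Definition line_pt (j : nat) (u v : R) : R := match j with O => u | S _ => v end.
Definition is_pderiv (j : nat) (g : R -> R -> R) (u v l : R) : Prop :=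
  derivable_pt_lim (line_restr j g u v) (line_pt j u v) l.
Definition is_vpderiv (j : nat) (h : R -> R -> V4) (u v : R) (L : V4) : Prop :=
  is_pderiv j (fun x y => c0 (h x y)) u v (c0 L) /\ is_pderiv j (fun x y => c1 (h x y)) u v (c1 L) /\
  is_pderiv j (fun x y => c2 (h x y)) u v (c2 L) /\ is_pderiv j (fun x y => c3 (h x y)) u v (c3 L).

Lemma is_pderiv_Dpart j g u v l : is_pderiv j g u v l -> Dpart j g u v = l.
Proof.
  unfold is_pderiv; destruct j; simpl; [unfold D1 | unfold D2]; intro H;
    (eapply uniqueness_limite; [apply epsilon_spec; eexists|]; exact H).
Qed.

Lemma is_pderiv_eq j g u v l l' : is_pderiv j g u v l -> l = l' -> is_pderiv j g u v l'.
Proof. intros H E; subst; exact H. Qed.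

Lemma is_pderiv_const j c u v : is_pderiv j (fun _ _ => c) u v 0.
Proof. unfold is_pderiv; destruct j; simpl; apply derivable_pt_lim_const. Qed.

Lemma is_pderiv_opp j g u v l : is_pderiv j g u v l -> is_pderiv j (fun x y => - g x y) u v (- l).
Proof. unfold is_pderiv; destruct j; simpl; intros H1; exact (derivable_pt_lim_opp _ _ _ H1). Qed.

Lemma is_pderiv_plus j g1 g2 u v l1 l2 : is_pderiv j g1 u v l1 -> is_pderiv j g2 u v l2 ->
  is_pderiv j (fun x y => g1 x y + g2 x y) u v (l1 + l2).
Proof. unfold is_pderiv; destruct j; simpl; intros H1 H2; exact (derivable_pt_lim_plus _ _ _ _ _ H1 H2). Qed.

Lemma is_pderiv_minus j g1 g2 u v l1 l2 : is_pderiv j g1 u v l1 -> is_pderiv j g2 u v l2 ->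
  is_pderiv j (fun x y => g1 x y - g2 x y) u v (l1 - l2).
Proof. unfold is_pderiv; destruct j; simpl; intros H1 H2; exact (derivable_pt_lim_minus _ _ _ _ _ H1 H2). Qed.

Lemma is_pderiv_mult j g1 g2 u v l1 l2 : is_pderiv j g1 u v l1 -> is_pderiv j g2 u v l2 ->
  is_pderiv j (fun x y => g1 x y * g2 x y) u v (l1 * g2 u v + g1 u v * l2).
Proof. unfold is_pderiv; destruct j; simpl; intros H1 H2; exact (derivable_pt_lim_mult _ _ _ _ _ H1 H2). Qed.

Lemma is_pderiv_div j g1 g2 u v l1 l2 :
  is_pderiv j g1 u v l1 -> is_pderiv j g2 u v l2 -> g2 u v <> 0 ->
  is_pderiv j (fun x y => g1 x y / g2 x y) u v ((l1 * g2 u v - l2 * g1 u v) / (g2 u v)²).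
Proof. unfold is_pderiv; destruct j; simpl; intros H1 H2 H3; exact (derivable_pt_lim_div _ _ _ _ _ H1 H2 H3). Qed.

Lemma is_vpderiv_const j C u v : is_vpderiv j (fun _ _ => C) u v vzero.
Proof. repeat split; apply is_pderiv_const. Qed.

Lemma is_vpderiv_add j A B u v LA LB : is_vpderiv j A u v LA -> is_vpderiv j B u v LB ->
  is_vpderiv j (fun x y => vadd (A x y) (B x y)) u v (vadd LA LB).
Proof.
  intros [a0 [a1 [a2 a3]]] [b0 [b1 [b2 b3]]]; unfold vadd; simpl.
  repeat split; apply is_pderiv_plus; assumption.
Qed.

Lemma is_vpderiv_scal j s A u v ls LA : is_pderiv j s u v ls -> is_vpderiv j A u v LA ->
  is_vpderiv j (fun x y => vscal (s x y) (A x y)) u v (vadd (vscal ls (A u v)) (vscal (s u v) LA)).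
Proof.
  intros Hs [a0 [a1 [a2 a3]]]; unfold vadd, vscal; simpl.
  repeat split; apply is_pderiv_mult; assumption.
Qed.

Lemma is_pderiv_ip j A B u v LA LB : is_vpderiv j A u v LA -> is_vpderiv j B u v LB ->
  is_pderiv j (fun x y => ip (A x y) (B x y)) u v (ip LA (B u v) + ip (A u v) LB).
Proof.
  intros [a0 [a1 [a2 a3]]] [b0 [b1 [b2 b3]]]. unfold ip.
  eapply is_pderiv_eq.
  - repeat apply is_pderiv_plus; try apply is_pderiv_opp; apply is_pderiv_mult; eassumption.
  - cbv beta; ring.
Qed.

Lemma smooth_D1 U g : smooth_on U g -> smooth_on U (D1 g).
Proof. intros H k. exact (proj1 (proj2 (proj2 (H (S k))))). Qed.
Lemma smooth_D2 U g : smooth_on U g -> smooth_on U (D2 g).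
Proof. intros H k. exact (proj2 (proj2 (proj2 (H (S k))))). Qed.

Lemma smooth_is_pderiv U g j u v : smooth_on U g -> U u v -> is_pderiv j g u v (Dpart j g u v).
Proof.
  intros H Hu. destruct (proj1 (proj2 (H 1%nat)) u v Hu) as [[l1 h1] [l2 h2]].
  destruct j; [assert (E : is_pderiv 0 g u v l1) by exact h1
              | assert (E : is_pderiv (S j) g u v l2) by exact h2];
    rewrite (is_pderiv_Dpart _ _ _ _ _ E); exact E.
Qed.

Lemma smooth_dpart U h j : smooth_map_on U h -> smooth_map_on U (dpart h j).
Proof.
  intros [s0 [s1 [s2 s3]]]. destruct j; simpl; unfold VD1, VD2; simpl;
  repeat split; first [apply smooth_D1 | apply smooth_D2]; assumption.
Qed.

Lemma smooth_is_vpderiv U h j u v : smooth_map_on U h -> U u v ->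
  is_vpderiv j h u v (dpart h j u v).
Proof.
  intros [s0 [s1 [s2 s3]]] Hu.
  repeat split; destruct j; apply (smooth_is_pderiv U); assumption.
Qed.

Lemma locally_line U j u v (P : R -> R -> Prop) : open2 U -> U u v ->
  (forall x y, U x y -> P x y) -> locally (line_pt j u v) (line_restr j P u v).
Proof.
  intros HU Hu HP. destruct (HU u v Hu) as [r [Hr H]]. exists (mkposreal r Hr).
  intros t Ht. change (Rabs (t - line_pt j u v) < r) in Ht.
  destruct j; simpl in *; apply HP, H; try exact Ht; rewrite Rminus_diag, Rabs_R0; exact Hr.
Qed.

Lemma is_pderiv_ext U j g h u v l : open2 U -> U u v ->
  (forall x y, U x y -> g x y = h x y) -> is_pderiv j h u v l -> is_pderiv j g u v l.
Proof.
  intros HU Hu E H. unfold is_pderiv in *. apply is_derive_Reals. apply is_derive_Reals in H.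
  apply (is_derive_ext_loc (line_restr j h u v)); auto.
  apply (filter_imp (line_restr j (fun x y => g x y = h x y) u v)).
  - destruct j; simpl; intros; symmetry; assumption.
  - apply (locally_line U); assumption.
Qed.

Lemma Dpart_ext U j g h u v : open2 U -> U u v -> smooth_on U h ->
  (forall x y, U x y -> g x y = h x y) -> Dpart j g u v = Dpart j h u v.
Proof.
  intros HU Hu Hh E. apply is_pderiv_Dpart.
  apply (is_pderiv_ext U j g h); auto. apply (smooth_is_pderiv U); auto.
Qed.

Lemma Dpart_locally_zero U j g u v : open2 U -> U u v ->
  (forall x y, U x y -> g x y = 0) -> Dpart j g u v = 0.
Proof.
  intros HU Hu E. apply is_pderiv_Dpart.
  apply (is_pderiv_ext U j g (fun _ _ => 0)); auto. apply is_pderiv_const.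
Qed.

Lemma smooth_is_derive_line U j g u v : smooth_on U g -> U u v ->
  is_derive (line_restr j g u v) (line_pt j u v) (Dpart j g u v).
Proof. intros. apply is_derive_Reals, (smooth_is_pderiv U); assumption. Qed.

Lemma Derive_Derive_D1_D2 U g a b : open2 U -> smooth_on U g -> U a b ->
  Derive (fun z => Derive (fun t => g z t) b) a = D1 (D2 g) a b /\
  ex_derive (fun z => Derive (fun t => g z t) b) a.
Proof.
  intros HU Hs Hab.
  assert (L : locally a (fun z => D2 g z b = Derive (fun t => g z t) b)).
  { apply (locally_line U 0 a b (fun x y => D2 g x y = Derive (fun t => g x t) y) HU Hab).
    intros x y Hxy. symmetry. apply is_derive_unique.
    exact (smooth_is_derive_line U 1 g x y Hs Hxy). }
  pose proof (smooth_is_derive_line U 0 (D2 g) a b (smooth_D2 U g Hs) Hab) as HD.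
  split.
  - transitivity (Derive (fun z => D2 g z b) a).
    + symmetry. exact (Derive_ext_loc _ _ _ L).
    + exact (is_derive_unique _ _ _ HD).
  - apply (ex_derive_ext_loc _ _ _ L). eexists. exact HD.
Qed.

Lemma Derive_Derive_D2_D1 U g a b : open2 U -> smooth_on U g -> U a b ->
  Derive (fun z => Derive (fun t => g t z) a) b = D2 (D1 g) a b /\
  ex_derive (fun z => Derive (fun t => g t z) a) b.
Proof.
  intros HU Hs Hab.
  assert (L : locally b (fun z => D1 g a z = Derive (fun t => g t z) a)).
  { apply (locally_line U 1 a b (fun x y => D1 g x y = Derive (fun t => g t y) x) HU Hab).
    intros x y Hxy. symmetry. apply is_derive_unique.
    exact (smooth_is_derive_line U 0 g x y Hs Hxy). }
  pose proof (smooth_is_derive_line U 1 (D1 g) a b (smooth_D1 U g Hs) Hab) as HD.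
  split.
  - transitivity (Derive (fun z => D1 g a z) b).
    + symmetry. exact (Derive_ext_loc _ _ _ L).
    + exact (is_derive_unique _ _ _ HD).
  - apply (ex_derive_ext_loc _ _ _ L). eexists. exact HD.
Qed.

(* Coquelicot's [Schwarz] needs the mixed partials to be continuous at the point;
   smoothness gives this on a box inside [U]. *)
Lemma D1_D2_comm U g u v : open2 U -> smooth_on U g -> U u v -> D1 (D2 g) u v = D2 (D1 g) u v.
Proof.
  intros HU Hs Hu.
  destruct (HU u v Hu) as [r [Hr Hbox]].
  destruct (Derive_Derive_D1_D2 U g u v HU Hs Hu) as [E12 _].
  destruct (Derive_Derive_D2_D1 U g u v HU Hs Hu) as [E21 _].
  rewrite <- E12, <- E21. apply Schwarz.
  - exists (mkposreal r Hr). intros a b Ha Hb. simpl in *. specialize (Hbox a b Ha Hb).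
    repeat split.
    + eexists. exact (smooth_is_derive_line U 0 g a b Hs Hbox).
    + eexists. exact (smooth_is_derive_line U 1 g a b Hs Hbox).
    + exact (proj2 (Derive_Derive_D1_D2 U g a b HU Hs Hbox)).
    + exact (proj2 (Derive_Derive_D2_D1 U g a b HU Hs Hbox)).
  - intros eps.
    destruct (smooth_D1 U _ (smooth_D2 U g Hs) O u v Hu eps (cond_pos eps)) as [d [Hd Hc]].
    exists (mkposreal (Rmin d r) (Rmin_pos _ _ Hd Hr)). intros a b Ha Hb. simpl in *.
    assert (Hab : U a b) by (apply Hbox; eapply Rlt_le_trans; eauto; apply Rmin_r).
    rewrite (proj1 (Derive_Derive_D1_D2 U g a b HU Hs Hab)), E12.
    apply Hc; eapply Rlt_le_trans; eauto; apply Rmin_l.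
  - intros eps.
    destruct (smooth_D2 U _ (smooth_D1 U g Hs) O u v Hu eps (cond_pos eps)) as [d [Hd Hc]].
    exists (mkposreal (Rmin d r) (Rmin_pos _ _ Hd Hr)). intros a b Ha Hb. simpl in *.
    assert (Hab : U a b) by (apply Hbox; eapply Rlt_le_trans; eauto; apply Rmin_r).
    rewrite (proj1 (Derive_Derive_D2_D1 U g a b HU Hs Hab)), E21.
    apply Hc; eapply Rlt_le_trans; eauto; apply Rmin_l.
Qed.

Lemma D1_D2_D2_comm U g u v : open2 U -> smooth_on U g -> U u v ->
  D1 (D2 (D2 g)) u v = D2 (D2 (D1 g)) u v.
Proof.
  intros HU Hs Hu. rewrite (D1_D2_comm U (D2 g) u v HU (smooth_D2 U g Hs) Hu).
  apply (Dpart_ext U 1 (D1 (D2 g)) (D2 (D1 g)) u v HU Hu).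
  - apply smooth_D2, smooth_D1; assumption.
  - intros x y Hxy. exact (D1_D2_comm U g x y HU Hs Hxy).
Qed.

Lemma dpart_comm U f i j x y : open2 U -> smooth_map_on U f -> U x y ->
  dpart (dpart f i) j x y = dpart (dpart f j) i x y.
Proof.
  intros HU [s0 [s1 [s2 s3]]] Hxy.
  destruct i as [|i], j as [|j]; try reflexivity; simpl; unfold VD1, VD2; simpl; f_equal;
    [symmetry|symmetry|symmetry|symmetry| | | | ]; apply (D1_D2_comm U); assumption.
Qed.

Lemma VD1_VD2_VD2_comm U f u v : open2 U -> smooth_map_on U f -> U u v ->
  VD1 (VD2 (VD2 f)) u v = VD2 (VD2 (VD1 f)) u v.
Proof.
  intros HU [s0 [s1 [s2 s3]]] Hu. unfold VD1, VD2; simpl; f_equal;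
    apply (D1_D2_D2_comm U); assumption.
Qed.

Definition gram2 (a b : V4) : R := ip a a * ip b b - ip a b * ip a b.
Definition tang_proj (a b A : V4) : V4 :=
  vadd (vscal (ip b b / gram2 a b * ip A a + - ip a b / gram2 a b * ip A b) a)
       (vscal (- ip a b / gram2 a b * ip A a + ip a a / gram2 a b * ip A b) b).

Lemma tproj_eq f A u v : tproj f A u v = tang_proj (VD1 f u v) (VD2 f u v) A.
Proof. reflexivity. Qed.
Lemma nproj_eq f A u v : nproj f A u v = vsub A (tang_proj (VD1 f u v) (VD2 f u v) A).
Proof. reflexivity. Qed.

Lemma tang_proj_orth a b A : gram2 a b <> 0 ->
  ip a (vsub A (tang_proj a b A)) = 0 /\ ip b (vsub A (tang_proj a b A)) = 0.
Proof.
  intro Hd. unfold tang_proj. ip_expand.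
  rewrite (ip_sym a A), (ip_sym b A), (ip_sym b a). unfold gram2 in *.
  split; field; exact Hd.
Qed.

Lemma nproj_orth f A k u v : detg f u v <> 0 -> ip (dpart f k u v) (nproj f A u v) = 0.
Proof.
  intro Hd. destruct (tang_proj_orth (VD1 f u v) (VD2 f u v) A Hd) as [h0 h1].
  destruct k; assumption.
Qed.

Lemma tv_eq f p u v : tv f p u v = vadd (vscal (fst p) (VD1 f u v)) (vscal (snd p) (VD2 f u v)).
Proof. reflexivity. Qed.

Lemma II_eq f p q u v : II f p q u v =
  vadd (vadd (vscal (fst p * fst q) (IIb f 0 0 u v)) (vscal (fst p * snd q) (IIb f 0 1 u v)))
       (vadd (vscal (snd p * fst q) (IIb f 1 0 u v)) (vscal (snd p * snd q) (IIb f 1 1 u v))).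
Proof. reflexivity. Qed.

Lemma IIb_comm U f u v : open2 U -> smooth_map_on U f -> U u v -> IIb f 1 0 u v = IIb f 0 1 u v.
Proof. intros HU Hs Hu. unfold IIb. rewrite (dpart_comm U f 1 0 u v); auto. Qed.

Lemma ip_tv f p q u v : ip (tv f p u v) (tv f q u v) =
  fst p * fst q * ip (VD1 f u v) (VD1 f u v) + (fst p * snd q + snd p * fst q) * ip (VD1 f u v) (VD2 f u v)
  + snd p * snd q * ip (VD2 f u v) (VD2 f u v).
Proof. rewrite !tv_eq. ip_expand. rewrite (ip_sym (VD2 f u v) (VD1 f u v)). ring. Qed.

Lemma Ash_eq f xi p u v : IIb f 1 0 u v = IIb f 0 1 u v ->
  Ash f xi p u v =
  (ginv f 0 0 u v * (fst p * ip (IIb f 0 0 u v) xi + snd p * ip (IIb f 0 1 u v) xi)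
   + ginv f 0 1 u v * (fst p * ip (IIb f 0 1 u v) xi + snd p * ip (IIb f 1 1 u v) xi),
   ginv f 1 0 u v * (fst p * ip (IIb f 0 0 u v) xi + snd p * ip (IIb f 0 1 u v) xi)
   + ginv f 1 1 u v * (fst p * ip (IIb f 0 1 u v) xi + snd p * ip (IIb f 1 1 u v) xi)).
Proof.
  intro E. unfold Ash, sum2. rewrite !II_eq. cbn [basis fst snd]. rewrite E. ip_expand.
  f_equal; ring.
Qed.

Definition gm_pderiv f j a b u v :=
  ip (dpart (dpart f a) j u v) (dpart f b u v) + ip (dpart f a u v) (dpart (dpart f b) j u v).

Lemma is_pderiv_gm U f j a b u v : smooth_map_on U f -> U u v ->
  is_pderiv j (gm f a b) u v (gm_pderiv f j a b u v).
Proof.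
  intros Hs Hu. apply is_pderiv_ip; apply (smooth_is_vpderiv U); auto; apply smooth_dpart; auto.
Qed.

Definition detg_pderiv f j u v :=
  gm_pderiv f j 0 0 u v * gm f 1 1 u v + gm f 0 0 u v * gm_pderiv f j 1 1 u v
  - (gm_pderiv f j 0 1 u v * gm f 0 1 u v + gm f 0 1 u v * gm_pderiv f j 0 1 u v).

Definition ginv_pderiv f j k l u v :=
  match k, l with
  | O, O => (gm_pderiv f j 1 1 u v * detg f u v - detg_pderiv f j u v * gm f 1 1 u v) / (detg f u v)²
  | S _, S _ => (gm_pderiv f j 0 0 u v * detg f u v - detg_pderiv f j u v * gm f 0 0 u v) / (detg f u v)²
  | _, _ => (- gm_pderiv f j 0 1 u v * detg f u v - detg_pderiv f j u v * - gm f 0 1 u v) / (detg f u v)²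
  end.

Lemma is_pderiv_ginv U f j k l u v : smooth_map_on U f -> U u v -> detg f u v <> 0 ->
  is_pderiv j (ginv f k l) u v (ginv_pderiv f j k l u v).
Proof.
  intros Hs Hu Hd.
  assert (Hdet : is_pderiv j (detg f) u v (detg_pderiv f j u v))
    by (apply is_pderiv_minus; apply is_pderiv_mult; apply (is_pderiv_gm U); auto).
  destruct k as [|k], l as [|l]; unfold ginv, ginv_pderiv; apply is_pderiv_div; auto;
    try apply is_pderiv_opp; apply (is_pderiv_gm U); auto.
Qed.

(** * Christoffel symbols and the Gauss equation *)

Lemma Gam_eq U f k i j x y : open2 U -> smooth_map_on U f -> U x y ->
  Gam f k i j x y = ginv f k 0 x y * ip (dpart (dpart f i) j x y) (dpart f 0 x y)
                  + ginv f k 1 x y * ip (dpart (dpart f i) j x y) (dpart f 1 x y).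
Proof.
  intros HU Hs Hxy. unfold Gam, sum2.
  rewrite !(is_pderiv_Dpart _ _ _ _ _ (is_pderiv_gm U f _ _ _ x y Hs Hxy)). unfold gm_pderiv.
  rewrite (dpart_comm U f j i x y), (dpart_comm U f 0 i x y), (dpart_comm U f 0 j x y),
    (dpart_comm U f 1 i x y), (dpart_comm U f 1 j x y); auto.
  rewrite (ip_sym (dpart f j x y) (dpart (dpart f i) 0 x y)),
    (ip_sym (dpart f j x y) (dpart (dpart f i) 1 x y)).
  field.
Qed.

Lemma Dpart_Gam U f j k i i' u v : open2 U -> smooth_map_on U f -> U u v -> detg f u v <> 0 ->
  Dpart j (Gam f k i i') u v =
    ginv_pderiv f j k 0 u v * ip (dpart (dpart f i) i' u v) (dpart f 0 u v)
    + ginv f k 0 u v * (ip (dpart (dpart (dpart f i) i') j u v) (dpart f 0 u v)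
                       + ip (dpart (dpart f i) i' u v) (dpart (dpart f 0) j u v))
  + (ginv_pderiv f j k 1 u v * ip (dpart (dpart f i) i' u v) (dpart f 1 u v)
    + ginv f k 1 u v * (ip (dpart (dpart (dpart f i) i') j u v) (dpart f 1 u v)
                       + ip (dpart (dpart f i) i' u v) (dpart (dpart f 1) j u v))).
Proof.
  intros HU Hs Hu Hd. apply is_pderiv_Dpart.
  apply (is_pderiv_ext U j _ (fun x y => ginv f k 0 x y * ip (dpart (dpart f i) i' x y) (dpart f 0 x y)
                  + ginv f k 1 x y * ip (dpart (dpart f i) i' x y) (dpart f 1 x y))); auto.
  { intros x y Hxy. apply (Gam_eq U); auto. }
  apply is_pderiv_plus; apply is_pderiv_mult; try (apply (is_pderiv_ginv U); auto);
    apply is_pderiv_ip; apply (smooth_is_vpderiv U); auto; repeat apply smooth_dpart; auto.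
Qed.

(* Third derivatives cancel once [f_uvv = f_vvu] is used; what survives is the
   normal part of the second derivatives. *)
Lemma Riem1212_Gauss U f u v : open2 U -> smooth_map_on U f -> U u v -> detg f u v <> 0 ->
  Riem1212 f u v = ip (IIb f 0 0 u v) (IIb f 1 1 u v) - ip (IIb f 0 1 u v) (IIb f 0 1 u v).
Proof.
  intros HU Hs Hu Hd.
  unfold Riem1212, sum2.
  change (D1 (Gam f ?k 1 1) u v) with (Dpart 0 (Gam f k 1 1) u v).
  change (D2 (Gam f ?k 0 1) u v) with (Dpart 1 (Gam f k 0 1) u v).
  rewrite !(Dpart_Gam U f), !(Gam_eq U f _ _ _ u v); auto.
  unfold IIb. rewrite !nproj_eq.
  assert (E2 : VD1 (VD2 f) u v = VD2 (VD1 f) u v) by exact (dpart_comm U f 1 0 u v HU Hs Hu).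
  assert (E3 := VD1_VD2_VD2_comm U f u v HU Hs Hu).
  unfold ginv_pderiv, ginv, detg_pderiv, gm_pderiv, detg, gm in *.
  cbv beta iota delta [dpart] in *.
  rewrite ?E2, ?E3.
  unfold tang_proj, gram2. ip_expand.
  set (a := VD1 f u v) in *. set (b := VD2 f u v) in *.
  set (A00 := VD1 (VD1 f) u v). set (A01 := VD2 (VD1 f) u v).
  set (A11 := VD2 (VD2 f) u v). set (A011 := VD2 (VD2 (VD1 f)) u v).
  ip_normalize (cons a (cons b (cons A00 (cons A01 (cons A11 (cons A011 nil)))))).
  unfold Rsqr. field. exact Hd.
Qed.

(* Differentiating [<Z^T, Z^T> = 0] along [d_j]: since [Z] is constant,
   [d_j Z^T = - d_j Z^perp], whose tangential part is [A_{Z^perp} d_j]. *)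
Lemma null_ZT_II_orth U f Z j u v : open2 U -> smooth_map_on U f -> U u v -> detg f u v <> 0 ->
  (forall x y, U x y -> ip (tproj f Z x y) (tproj f Z x y) = 0) ->
  fst (ZT f Z u v) * ip (IIb f 0 j u v) (nproj f Z u v)
  + snd (ZT f Z u v) * ip (IIb f 1 j u v) (nproj f Z u v) = 0.
Proof.
  intros HU Hs Hu Hd Hn.
  assert (Hcoord : forall k, is_pderiv j (fun x y => sum2 (fun l => ginv f k l x y * ip Z (dpart f l x y))) u v
     (sum2 (fun l => ginv_pderiv f j k l u v * ip Z (dpart f l u v)
                      + ginv f k l u v * (ip vzero (dpart f l u v) + ip Z (dpart (dpart f l) j u v))))).
  { intro k. unfold sum2. apply is_pderiv_plus; apply is_pderiv_mult; try (apply (is_pderiv_ginv U); auto);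
      apply is_pderiv_ip; try apply is_vpderiv_const; apply (smooth_is_vpderiv U); auto; apply smooth_dpart; auto. }
  evar (L : V4).
  assert (HL : is_vpderiv j (fun x y => tproj f Z x y) u v L).
  { unfold L, tproj, tv, tcoord. cbv beta iota delta [fst snd].
    apply is_vpderiv_add; apply is_vpderiv_scal; try apply Hcoord; apply (smooth_is_vpderiv U); auto;
      first [exact (smooth_dpart U f 0 Hs) | exact (smooth_dpart U f 1 Hs)]. }
  pose proof (is_pderiv_Dpart _ _ _ _ _ (is_pderiv_ip j _ _ u v _ _ HL HL)) as E.
  cbv beta in E.
  rewrite (Dpart_locally_zero U j (fun x y => ip (tproj f Z x y) (tproj f Z x y)) u v HU Hu Hn) in E.
  unfold L in E; clear L HL Hcoord.
  apply (Rmult_eq_reg_l 2); [|lra]. rewrite Rmult_0_r, E.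
  unfold IIb. rewrite !nproj_eq, !tproj_eq.
  unfold ZT, tcoord, ginv_pderiv, ginv, detg_pderiv, gm_pderiv, detg, gm, sum2.
  cbn [dpart fst snd].
  unfold tang_proj, gram2.
  ip_expand. rewrite ?ip_zero_l.
  set (a := VD1 f u v). set (b := VD2 f u v).
  set (A0 := dpart (VD1 f) j u v). set (A1 := dpart (VD2 f) j u v).
  ip_normalize (cons a (cons b (cons A0 (cons A1 (cons Z nil))))).
  unfold Rsqr. field. exact Hd.
Qed.

(** * The null frame (Z^T, W) *)

(* Inverting the Gram matrix of the null pair [(t, w)], [<t,t> = <w,w> = 0],
   [<t,w> = -1], expresses the metric in the coordinates of that pair. *)
Lemma null_pair_gram g00 g01 g11 t0 t1 w0 w1 :
  t0*t0*g00 + 2*t0*t1*g01 + t1*t1*g11 = 0 ->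
  w0*w0*g00 + 2*w0*w1*g01 + w1*w1*g11 = 0 ->
  t0*w0*g00 + (t0*w1+t1*w0)*g01 + t1*w1*g11 = -1 ->
  (t0*w1 - t1*w0) <> 0 /\ g00 = 2*t1*w1/(t0*w1 - t1*w0)^2 /\
  g01 = -(t0*w1+t1*w0)/(t0*w1 - t1*w0)^2 /\ g11 = 2*t0*w0/(t0*w1 - t1*w0)^2.
Proof.
  set (Mtt := t0*t0*g00 + 2*t0*t1*g01 + t1*t1*g11).
  set (Mww := w0*w0*g00 + 2*w0*w1*g01 + w1*w1*g11).
  set (Mtw := t0*w0*g00 + (t0*w1+t1*w0)*g01 + t1*w1*g11).
  set (p := t0*w1 - t1*w0).
  intros Ctt Cww Ctw.
  assert (Hp : p <> 0).
  { intro Hp0.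
    assert (e0 : t0 * Mtw - w0 * Mtt = (t0*g01 + t1*g11) * p) by (unfold Mtw, Mtt, p; ring).
    assert (e1 : t1 * Mtw - w1 * Mtt = - (t0*g00 + t1*g01) * p) by (unfold Mtw, Mtt, p; ring).
    rewrite Hp0, Ctt, Ctw in e0, e1. assert (t0 = 0) by lra. assert (t1 = 0) by lra.
    unfold Mtw in Ctw. subst. lra. }
  assert (E00 : g00 * p^2 = w1^2*Mtt - 2*w1*t1*Mtw + t1^2*Mww) by (unfold Mtt, Mtw, Mww, p; ring).
  assert (E01 : g01 * p^2 = -w1*w0*Mtt + (w1*t0 + t1*w0)*Mtw - t1*t0*Mww) by (unfold Mtt, Mtw, Mww, p; ring).
  assert (E11 : g11 * p^2 = w0^2*Mtt - 2*w0*t0*Mtw + t0^2*Mww) by (unfold Mtt, Mtw, Mww, p; ring).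
  rewrite Ctt, Cww, Ctw in E00, E01, E11.
  assert (Hp2 : p^2 <> 0) by (apply pow_nonzero; exact Hp).
  repeat split; auto; apply (Rmult_eq_reg_r (p^2)); auto;
    [rewrite E00 | rewrite E01 | rewrite E11]; field; auto.
Qed.

Section NullFrame.

Variables (f : R -> R -> V4) (Z : V4) (u v t0 t1 w0 w1 : R).

Local Notation fu := (VD1 f u v).
Local Notation fv := (VD2 f u v).
Local Notation P00 := (IIb f 0 0 u v).
Local Notation P01 := (IIb f 0 1 u v).
Local Notation P11 := (IIb f 1 1 u v).
Local Notation Zperp := (nproj f Z u v).
Local Notation T := (tv f (t0, t1) u v).
Local Notation W := (tv f (w0, w1) u v).
Local Notation IITT := (II f (t0, t1) (t0, t1) u v).
Local Notation IIWW := (II f (w0, w1) (w0, w1) u v).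
Local Notation p := (t0 * w1 - t1 * w0).

Hypothesis hdet : detg f u v <> 0.
Hypothesis hsym : IIb f 1 0 u v = IIb f 0 1 u v.
Hypothesis hTT : ip T T = 0.
Hypothesis hWW : ip W W = 0.
Hypothesis hTW : ip T W = -1.

Lemma gm_null_frame : p <> 0 /\ ip fu fu = 2*t1*w1/p^2 /\
  ip fu fv = -(t0*w1+t1*w0)/p^2 /\ ip fv fv = 2*t0*w0/p^2.
Proof.
  rewrite ip_tv in hTT, hWW, hTW. cbn [fst snd] in hTT, hWW, hTW.
  apply null_pair_gram; [rewrite <- hTT | rewrite <- hWW | rewrite <- hTW]; ring.
Qed.

Lemma detg_null_frame : detg f u v = - / p^2.
Proof.
  destruct gm_null_frame as [Hp [E00 [E01 E11]]].
  unfold detg, gm; cbn [dpart]. rewrite E00, E01, E11. field. exact Hp.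
Qed.

Lemma ip_II_diag P s0 s1 : ip P (II f (s0, s1) (s0, s1) u v) =
  s0*s0*ip P P00 + 2*s0*s1*ip P P01 + s1*s1*ip P P11.
Proof. rewrite II_eq, hsym. cbn [fst snd]. ip_expand. ring. Qed.

Lemma Hvec_sqr_sub_Gauss :
  ip (Hvec f u v) (Hvec f u v) - (ip P00 P11 - ip P01 P01) / detg f u v = ip IIWW IITT.
Proof.
  destruct gm_null_frame as [Hp [E00 [E01 E11]]].
  rewrite ip_II_diag, !(ip_sym IIWW), !ip_II_diag.
  unfold Hvec, vsum2. rewrite hsym, detg_null_frame. unfold ginv. rewrite detg_null_frame.
  unfold gm; cbn [dpart]. rewrite E00, E01, E11.
  ip_expand. ip_normalize (cons P00 (cons P01 (cons P11 nil))).
  field. exact Hp.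
Qed.

Lemma ip_tangent_normal k i j : ip (dpart f k u v) (IIb f i j u v) = 0.
Proof. apply nproj_orth, hdet. Qed.

Lemma ip_tv_normal q P : ip (dpart f 0 u v) P = 0 -> ip (dpart f 1 u v) P = 0 ->
  ip (tv f q u v) P = 0.
Proof. cbn [dpart]. intros Hu Hv. rewrite tv_eq. ip_expand. rewrite Hu, Hv. ring. Qed.

Lemma ip_tv_II q r s : ip (tv f q u v) (II f r s u v) = 0.
Proof.
  apply ip_tv_normal; rewrite II_eq; ip_expand; rewrite !ip_tangent_normal; ring.
Qed.

Lemma IITT_spacelike : IITT <> vzero -> 0 < ip IITT IITT.
Proof.
  intro HN. apply (ip_orth_timelike_pos (vadd T W)); trivial.
  - ip_expand. rewrite (ip_sym W T). lra.
  - rewrite ip_sym, ip_add_l, !ip_tv_II. ring.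
Qed.

Hypothesis hT : ZT f Z u v = (t0, t1).
Hypothesis hZ : ip Z Z = 1.
Hypothesis hA : forall j, t0 * ip (IIb f 0 j u v) Zperp + t1 * ip (IIb f 1 j u v) Zperp = 0.

Lemma Zperp_unit : ip Zperp Zperp = 1.
Proof.
  assert (EZ : Z = vadd T Zperp).
  { unfold nproj, tproj. unfold ZT in hT. rewrite hT.
    destruct Z, (tv f (t0, t1) u v); unfold vadd, vsub, vscal; simpl; f_equal; ring. }
  assert (TZ : ip T Zperp = 0) by (apply ip_tv_normal; apply nproj_orth, hdet).
  rewrite <- hZ. replace (ip Z Z) with (ip (vadd T Zperp) (vadd T Zperp)) by (rewrite <- EZ; reflexivity).
  ip_expand. rewrite hTT, TZ, (ip_sym Zperp T), TZ. ring.
Qed.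

Lemma Zperp_orth_IITT : ip Zperp IITT = 0.
Proof.
  rewrite ip_II_diag, (ip_sym Zperp P00), (ip_sym Zperp P01), (ip_sym Zperp P11).
  pose proof (hA 0) as A0. pose proof (hA 1) as A1. rewrite hsym in A0.
  transitivity (t0 * (t0 * ip P00 Zperp + t1 * ip P01 Zperp) + t1 * (t0 * ip P01 Zperp + t1 * ip P11 Zperp));
    [ring | rewrite A0, A1; ring].
Qed.

Lemma KN_null_frame : IITT <> vzero -> KN f Z (w0, w1) u v = vnorm IITT * ip IIWW Zperp.
Proof.
  intro HN.
  destruct gm_null_frame as [Hp [E00 [E01 E11]]].
  set (n := vnorm IITT).
  assert (Hn2 : n * n = ip IITT IITT) by (apply sqrt_sqrt; apply Rlt_le, IITT_spacelike, HN).
  assert (Hn : n <> 0) by (intro e; pose proof (IITT_spacelike HN); rewrite e in Hn2; lra).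
  assert (Hs2 : sqrt 2 * sqrt 2 = 2) by (apply sqrt_sqrt; lra).
  assert (Hs : sqrt 2 <> 0) by (intro e; rewrite e in Hs2; lra).
  unfold KN, nuv, e1c, e2c, psub. unfold ZT in hT |- *. rewrite hT. cbn [fst snd].
  rewrite ip_tv, !(Ash_eq f _ _ u v hsym). cbn [fst snd].
  fold n. rewrite !ip_scal_r, !ip_II_diag, (ip_sym IIWW), ip_II_diag.
  unfold ginv. rewrite detg_null_frame. unfold gm; cbn [dpart]. rewrite E00, E01, E11.
  rewrite ip_II_diag, !(ip_sym IITT), !ip_II_diag in Hn2.
  (* [e1] and [e2] each carry a factor [/ sqrt 2], and [nu] a factor [/ n]. *)
  match goal with |- _ = n * ?c => transitivity (/ sqrt 2 * / sqrt 2 * 2 * (/ n * (n * n * c))) end.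
  2: { rewrite <- Rinv_mult, Hs2. field. exact Hn. }
  rewrite Hn2. ip_normalize (cons P00 (cons P01 (cons P11 (cons Zperp nil)))).
  (* [hA] makes [(<P00,Zperp>, <P01,Zperp>, <P11,Zperp>)] proportional to
     [(t1^2, -t0 t1, t0^2)]; we solve for it according to whether [t0 = 0]. *)
  pose proof (hA 0) as A0. pose proof (hA 1) as A1. rewrite hsym in A0.
  destruct (Req_dec t0 0) as [Et0|Et0].
  - assert (Ht1 : t1 <> 0) by (intro e; apply Hp; rewrite Et0, e; ring).
    assert (Hw0 : w0 <> 0) by (intro e; apply Hp; rewrite Et0, e; ring).
    rewrite Et0 in A0, A1 |- *.
    assert (Ez01 : ip P01 Zperp = 0) by (apply (Rmult_eq_reg_l t1); lra).
    assert (Ez11 : ip P11 Zperp = 0) by (apply (Rmult_eq_reg_l t1); lra).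
    rewrite Ez01, Ez11. field. auto.
  - assert (Ez01 : ip P01 Zperp = - t1 * ip P11 Zperp / t0) by (field_simplify_eq; lra).
    assert (Ez00 : ip P00 Zperp = - t1 * ip P01 Zperp / t0) by (field_simplify_eq; lra).
    rewrite Ez00, Ez01. field. auto.
Qed.

Lemma II_WW_normal_frame : IITT <> vzero ->
  let m := ip (Hvec f u v) (Hvec f u v) - (ip P00 P11 - ip P01 P01) / detg f u v in
  let kN := KN f Z (w0, w1) u v in
  IIWW = vadd (vscal (kN / vnorm IITT) Zperp) (vscal (m / vnorm IITT) (nuv f Z u v))
  /\ ip IIWW IIWW * ip IITT IITT = m ^ 2 + kN ^ 2.
Proof.
  intros HN m kN. subst m kN.
  rewrite Hvec_sqr_sub_Gauss, KN_null_frame by exact HN.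
  pose proof (IITT_spacelike HN) as Hnn.
  set (n := vnorm IITT).
  assert (Hn2 : n * n = ip IITT IITT) by (apply sqrt_sqrt; lra).
  assert (Hn : n <> 0) by (intro e; rewrite e in Hn2; lra).
  assert (EW := normal_frame_decomp T W Zperp IITT IIWW hTT hWW hTW).
  rewrite !ip_tv_II, Zperp_unit, Zperp_orth_IITT in EW.
  rewrite !(ip_tv_normal _ Zperp), (ip_sym IIWW IITT) in EW by apply nproj_orth, hdet.
  specialize (EW eq_refl eq_refl eq_refl eq_refl eq_refl eq_refl Hnn eq_refl eq_refl).
  split.
  - unfold nuv, ZT in hT |- *. rewrite hT. fold n. rewrite EW at 1.
    rewrite vscal_vscal, (ip_sym IITT IIWW), <- Hn2.
    f_equal; f_equal; field; exact Hn.
  - rewrite (ip_sym IIWW IITT).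
    set (c := ip IIWW Zperp) in *. set (m := ip IITT IIWW) in *.
    rewrite EW at 1 2. ip_expand.
    rewrite Zperp_unit, Zperp_orth_IITT, (ip_sym IITT Zperp), Zperp_orth_IITT.
    replace ((n * c) ^ 2) with (n * n * c ^ 2) by ring. rewrite Hn2.
    field. lra.
Qed.

End NullFrame.

Theorem mainTheorem14
  (U : R -> R -> Prop) (f : R -> R -> V4) (Z : V4)
  (hU : open2 U)
  (hsmooth : smooth_map_on U f)
  (htimelike : forall u v, U u v -> detg f u v < 0)
  (hZ : ip Z Z = 1)
  (hnull : forall u v, U u v ->
     tproj f Z u v <> vzero /\ ip (tproj f Z u v) (tproj f Z u v) = 0)
  (hII : forall u v, U u v -> II f (ZT f Z u v) (ZT f Z u v) u v <> vzero) :
  forall u v (w : R * R), U u v ->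
    tv f w u v <> vzero -> ip (tv f w u v) (tv f w u v) = 0 ->
    ip (tproj f Z u v) (tv f w u v) = -1 ->
    let N := II f (ZT f Z u v) (ZT f Z u v) u v in
    let H := Hvec f u v in
    let K := Kgauss f u v in
    let kN := KN f Z w u v in
    let IIWW := II f w w u v in
    IIWW = vadd (vscal (kN / vnorm N) (nproj f Z u v))
                (vscal ((ip H H - K) / vnorm N) (nuv f Z u v))
    /\ ip IIWW IIWW * ip N N = (ip H H - K) ^ 2 + kN ^ 2.
Proof.
  (* [W <> 0] (like [Z^T <> 0]) already follows from [<Z^T, W> = -1]. *)
  intros u v [w0 w1] Hu _ Hww HTw. cbv zeta.
  assert (Hd : detg f u v <> 0) by (specialize (htimelike u v Hu); lra).
  assert (HTT := proj2 (hnull u v Hu)).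
  assert (HA : forall j, fst (ZT f Z u v) * ip (IIb f 0 j u v) (nproj f Z u v)
                       + snd (ZT f Z u v) * ip (IIb f 1 j u v) (nproj f Z u v) = 0)
    by (intro j; apply (null_ZT_II_orth U); auto; intros x y Hxy; apply (hnull x y Hxy)).
  assert (HN := hII u v Hu).
  change (tproj f Z u v) with (tv f (ZT f Z u v) u v) in HTT, HTw.
  destruct (ZT f Z u v) as [t0 t1] eqn:hT.
  unfold Kgauss. rewrite (Riem1212_Gauss U f u v hU hsmooth Hu Hd).
  exact (II_WW_normal_frame f Z u v t0 t1 w0 w1 Hd (IIb_comm U f u v hU hsmooth Hu)
           HTT Hww HTw hT hZ HA HN).
Qed.
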